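(* Let $n,m\ge 3$ and let $G=P_n\square P_m$ be the grid graph. A set $M$ of vertices of $G$ of cardinality $k>3$ is a $k$-minimal if all of the following hold: (i) $M$ contains at most one corner vertex; (ii) $M$ contains two boundary vertices $u$ and $v$ lying on opposite sides of the grid that are not on the same line, and $M$ contains no other pair of vertices lying on opposite sides; (iii) if $u$ and $v$ lie on horizontal sides, there is a minimal horizontal line segment path between $u$ and $v$ with respect to $M$; otherwise there is a minimal vertical line segment path between $u$ and $v$ with respect to $M$.
   Context: The grid graph $P_n\square P_m$ has vertex set $\{(i,j):0\le i\le n-1,\ 0\le j\le m-1\}$, with $(i,j)$ adjacent to $(k,l)$ iff $|i-k|+|j-l|=1$; the distance is $d((i,j),(k,l))=|i-k|+|j-l|$. The first coordinate is the horizontal coordinate, the second the vertical coordinate. A vertex $w$ resolves $u,v$ if $d(w,u)\ne d(w,v)$; a set $R$ is resolving if every pair of distinct vertices is resolved by some vertex of $R$; a $k$-minimal is a resolving set $R$ of cardinality $k$ such that no $R\setminus\{x\}$, $x\in R$, is resolving. Corner vertices have degree 2, side vertices degree 3; boundary vertices are corner or side vertices. A horizontal line is the set of vertices with a fixed vertical coordinate, a vertical line the set of vertices with a fixed horizontal coordinate; two vertices are on the same line if they share a coordinate. The sides are the four lines with first coordinate $0$ or $n-1$ (vertical sides) or second coordinate $0$ or $m-1$ (horizontal sides); two sides are opposite if they share no vertex; two vertices lie on opposite sides if one lies on a side and the other on the opposite side. A line segment between two vertices $a,b$ on the same line is the unique shortest path between them (horizontal or vertical according to the line). Given a set $R$ of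 vertices and $u,v\in R$, a horizontal line segment path between $u$ and $v$ with respect to $R$ is a shortest path from $u$ to $v$ that uses only the horizontal line segments between vertices of $R$ (lying on a common horizontal line) and the vertical lines intersecting these line segments; a vertex $w\in R$ with no other vertex of $R$ on its horizontal line counts as a horizontal line segment of length one. It is minimal if it exists with respect to $R$ but no horizontal line segment path between $u$ and $v$ exists with respect to $R\setminus\{w\}$ for any $w\in R$. Vertical line segment paths and their minimality are defined analogously, with vertical line segments between vertices of $R$ and the horizontal lines intersecting them. *)

From mathcomp Require Import all_boot.
Set Implicit Arguments. Unset Strict Implicit. Unset Printing Implicit Defensive.

Section Grid.
Variables n m : nat.

Definition gvert := ('I_n * 'I_m)%type.

Definition absd (a b : nat) : nat := (a - b) + (b - a).

Definition gdist (a b : gvert) : nat := absd a.1 b.1 + absd a.2 b.2.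

Definition gadj (a b : gvert) : bool := gdist a b == 1.

Definition resolves (w a b : gvert) : bool := gdist w a != gdist w b.

Definition resolving (R : {set gvert}) : Prop :=
  forall a b : gvert, a != b -> exists2 w, w \in R & resolves w a b.

Definition kminimal (k : nat) (R : {set gvert}) : Prop :=
  [/\ resolving R, #|R| = k & forall x, x \in R -> ~ resolving (R :\ x)].

Definition is_corner (a : gvert) : bool :=
  ((a.1 == 0 :> nat) || (a.1 == n.-1 :> nat)) &&
  ((a.2 == 0 :> nat) || (a.2 == m.-1 :> nat)).

Definition is_boundary (a : gvert) : bool :=
  [|| a.1 == 0 :> nat, a.1 == n.-1 :> nat, a.2 == 0 :> nat | a.2 == m.-1 :> nat].

Definition same_line (a b : gvert) : bool := (a.1 == b.1 :> nat) || (a.2 == b.2 :> nat).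

Definition opp_vert_sides (a b : gvert) : bool :=
  ((a.1 == 0 :> nat) && (b.1 == n.-1 :> nat)) || ((a.1 == n.-1 :> nat) && (b.1 == 0 :> nat)).

Definition opp_horiz_sides (a b : gvert) : bool :=
  ((a.2 == 0 :> nat) && (b.2 == m.-1 :> nat)) || ((a.2 == m.-1 :> nat) && (b.2 == 0 :> nat)).

Definition opp_sides (a b : gvert) : bool := opp_vert_sides a b || opp_horiz_sides a b.

(* An edge a--b may be used w.r.t. R if either
   - it is horizontal (same vertical coordinate j) and lies inside the horizontal
     line segment between two vertices x, y of R on the horizontal line j; or
   - it is vertical (same horizontal coordinate i) and the vertical line i
     intersects some horizontal line segment between vertices x, y of R lying
     on a common horizontal line (x = y allowed: a lone vertex of R counts as
     a segment of length one). *)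
Definition hseg_step (R : {set gvert}) (a b : gvert) : bool :=
  gadj a b &&
  ( ((a.2 == b.2 :> nat) &&
      [exists x in R, exists y in R,
         [&& x.2 == a.2 :> nat, y.2 == a.2 :> nat,
             minn x.1 y.1 <= minn a.1 b.1 & maxn a.1 b.1 <= maxn x.1 y.1]])
    || ((a.1 == b.1 :> nat) &&
      [exists x in R, exists y in R,
         [&& x.2 == y.2 :> nat, minn x.1 y.1 <= a.1 & a.1 <= maxn x.1 y.1]]) ).

Definition vseg_step (R : {set gvert}) (a b : gvert) : bool :=
  gadj a b &&
  ( ((a.1 == b.1 :> nat) &&
      [exists x in R, exists y in R,
         [&& x.1 == a.1 :> nat, y.1 == a.1 :> nat,
             minn x.2 y.2 <= minn a.2 b.2 & maxn a.2 b.2 <= maxn x.2 y.2]])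
    || ((a.2 == b.2 :> nat) &&
      [exists x in R, exists y in R,
         [&& x.1 == y.1 :> nat, minn x.2 y.2 <= a.2 & a.2 <= maxn x.2 y.2]]) ).

Definition shortest_path_by (step : rel gvert) (u v : gvert) (s : seq gvert) : bool :=
  [&& path step u s, last u s == v & size s == gdist u v].

Definition hlsp_exists (R : {set gvert}) (u v : gvert) : Prop :=
  [/\ u \in R, v \in R & exists s, shortest_path_by (hseg_step R) u v s].

Definition vlsp_exists (R : {set gvert}) (u v : gvert) : Prop :=
  [/\ u \in R, v \in R & exists s, shortest_path_by (vseg_step R) u v s].

Definition minimal_hlsp (R : {set gvert}) (u v : gvert) : Prop :=
  hlsp_exists R u v /\ forall w, w \in R -> ~ hlsp_exists (R :\ w) u v.

Definition minimal_vlsp (R : {set gvert}) (u v : gvert) : Prop :=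
  vlsp_exists R u v /\ forall w, w \in R -> ~ vlsp_exists (R :\ w) u v.

End Grid.

From mathcomp Require Import all_boot zify.
Set Implicit Arguments. Unset Strict Implicit. Unset Printing Implicit Defensive.

(* Transposing, mirroring the columns and reversing paths reduce the theorem to
   u = (a, 0) on the bottom side and v on the top side with a < v.1.  Shortest
   paths from u to v then only go right and up, and the columns of row r that a
   horizontal line segment path w.r.t. R can reach form an interval [a, reach R r]:
   row r+1 stretches the interval to its rightmost vertex of R, provided it has a
   vertex of R inside the current interval.  So the path exists iff
   v.1 <= reach R (m-1), and minimality says that removing any w other than u, v
   from M lowers this reach below v.1.
   - M resolves: two vertices not resolved by u and v are separated by a column
     that the path must cross horizontally; an end of the segment used there
     resolves them.
   - M :\ u (resp. M :\ v) misses the bottom (top) row and, by (ii), one vertical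
     side.  For w on an inner row r+1 and c = reach M r, every vertex of M :\ w
     lies in {col <= c, row <= r'} or in {col > c, row > r'}, where r' is r or
     r+1.  Either way two diagonally adjacent vertices are at equal distance from
     every remaining vertex. *)

Section Grid.
Variables n m : nat.
Implicit Types (x y z p q : gvert n m) (R : {set gvert n m}).

Lemma gvert_eq x y : (x.1 : nat) = y.1 -> (x.2 : nat) = y.2 -> x = y.
Proof. by case: x y => [x1 x2] [y1 y2] /= /val_inj -> /val_inj ->. Qed.

Lemma gdistC x y : gdist x y = gdist y x.
Proof. rewrite /gdist /absd; lia. Qed.

Lemma gdist_triangle x y z : gdist x z <= gdist x y + gdist y z.
Proof. rewrite /gdist /absd; lia. Qed.

Lemma hseg_stepC R x y : hseg_step R x y = hseg_step R y x.
Proof.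
rewrite /hseg_step /gadj gdistC; congr (_ && _).
rewrite (eq_sym (nat_of_ord x.2)) (eq_sym (nat_of_ord x.1)) (minnC y.1) (maxnC y.1).
by case: eqP => [->|_]; case: eqP => [->|].
Qed.

Lemma hseg_step_gdist R x y : hseg_step R x y -> gdist x y = 1.
Proof. by case/andP => /eqP. Qed.

Lemma path_gdist_le_size R x s : path (hseg_step R) x s -> gdist x (last x s) <= size s.
Proof.
elim: s x => [|y s IH] x /=; first by rewrite /gdist /absd; lia.
case/andP => /hseg_step_gdist xy /IH; have := gdist_triangle x y (last y s); lia.
Qed.

Lemma hseg_step_horizontal R x y : hseg_step R x y -> (x.1 : nat) <> y.1 ->
  exists2 x' : gvert n m, x' \in R & exists2 y' : gvert n m, y' \in R &
    [/\ (x'.2 : nat) = x.2, (y'.2 : nat) = x.2,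
        minn x'.1 y'.1 <= minn x.1 y.1 & maxn x.1 y.1 <= maxn x'.1 y'.1].
Proof.
case/andP => _ /orP [/andP [_ /existsP [x' /andP [x'R /existsP [y' /andP [y'R]]]]]|/andP [/eqP //]].
by case/and4P => /eqP ? /eqP ? ? ?; exists x' => //; exists y'.
Qed.

Lemma hseg_step_right R x y p q : x \in R -> y \in R ->
  (x.2 : nat) = p.2 -> (y.2 : nat) = p.2 -> (q.2 : nat) = p.2 -> (q.1 : nat) = p.1.+1 ->
  minn x.1 y.1 <= p.1 -> q.1 <= maxn x.1 y.1 -> hseg_step R p q.
Proof.
move=> xR yR xp yp qp q1 mn mx; apply/andP; split.
  by rewrite /gadj /gdist /absd qp q1; apply/eqP; lia.
apply/orP; left; rewrite qp eqxx; apply/existsP; exists x; rewrite xR /=.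
by apply/existsP; exists y; rewrite yR xp yp eqxx q1 /=; apply/andP; lia.
Qed.

Lemma hseg_step_up R x y p q : x \in R -> y \in R -> (x.2 : nat) = y.2 ->
  (q.1 : nat) = p.1 -> (q.2 : nat) = p.2.+1 -> minn x.1 y.1 <= p.1 <= maxn x.1 y.1 ->
  hseg_step R p q.
Proof.
move=> xR yR xy q1 q2 cov; apply/andP; split.
  by rewrite /gadj /gdist /absd q1 q2; apply/eqP; lia.
apply/orP; right; rewrite q1 eqxx; apply/existsP; exists x; rewrite xR /=.
by apply/existsP; exists y; rewrite yR xy eqxx.
Qed.

Lemma hseg_path_crosses R s x c : path (hseg_step R) x s -> x.1 <= c -> c < (last x s).1 ->
  exists2 x' : gvert n m, x' \in R & exists2 y' : gvert n m, y' \in R &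
    (x'.2 : nat) = y'.2 /\ minn x'.1 y'.1 <= c < maxn x'.1 y'.1.
Proof.
elim: s x => [|y s IH] x /=; first lia.
case/andP => st pth xc cl; case: (leqP y.1 c) => yc; first exact: IH pth yc cl.
have [|x' x'R [y' y'R [ex ey mn mx]]] := hseg_step_horizontal st; first lia.
exists x' => //; exists y' => //; split; [by rewrite ex ey | lia].
Qed.

Lemma straddling_segment_resolves x y p q c : (x.2 : nat) = y.2 ->
  minn x.1 y.1 <= c < maxn x.1 y.1 -> p.1 <= c < q.1 -> resolves x p q || resolves y p q.
Proof. by move=> xy; rewrite /resolves /gdist /absd xy; do 2 case: eqP => //=; lia. Qed.

Lemma in_setD1_other_row R (w : gvert n m) y : (y.2 : nat) != w.2 -> (y \in R :\ w) = (y \in R).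
Proof. by move=> yw; rewrite !inE; case: eqP => // E; rewrite E eqxx in yw. Qed.

Lemma equidistant_not_resolving R p q :
  p != q -> (forall z : gvert n m, z \in R -> gdist z p = gdist z q) -> ~ resolving R.
Proof. by move=> pq H /(_ _ _ pq) [w /H wpq]; rewrite /resolves wpq eqxx. Qed.

(* (c, r+1) and (c+1, r) are equidistant from every vertex outside the quadrants
   {col <= c, row > r} and {col > c, row <= r}. *)
Lemma diagonal_split_not_resolving R c r : c.+1 < n -> r.+1 < m ->
  (forall z : gvert n m, z \in R -> (z.1 <= c) = (z.2 <= r)) -> ~ resolving R.
Proof.
move=> cn rm H; have c0 : c < n by lia. have r0 : r < m by lia.
apply: (@equidistant_not_resolving _ (Ordinal c0, Ordinal rm) (Ordinal cn, Ordinal r0)).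
  by apply/eqP => /(congr1 (fun z => nat_of_ord z.1)) /=; lia.
move=> z /H; rewrite /gdist /absd /=; case: leqP; case: leqP => //; lia.
Qed.

Lemma antidiagonal_split_not_resolving R c r : c.+1 < n -> r.+1 < m ->
  (forall z : gvert n m, z \in R -> (z.1 <= c) = (r < z.2)) -> ~ resolving R.
Proof.
move=> cn rm H; have c0 : c < n by lia. have r0 : r < m by lia.
apply: (@equidistant_not_resolving _ (Ordinal c0, Ordinal r0) (Ordinal cn, Ordinal rm)).
  by apply/eqP => /(congr1 (fun z => nat_of_ord z.1)) /=; lia.
move=> z /H; rewrite /gdist /absd /=; case: leqP; case: leqP => //; lia.
Qed.

End Grid.

Section Reach.
Variables (n m : nat) (a : nat).
Implicit Types (x y z : gvert n m) (M R : {set gvert n m}).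

Definition row_hits R h r := [exists y in R, (y.2 == r :> nat) && (y.1 <= h)].
Definition row_max R r := \max_(y in R | y.2 == r :> nat) (y.1 : nat).
Definition reach_step R h r := if row_hits R h r then maxn h (row_max R r) else h.
Fixpoint reach R r := if r is r'.+1 then reach_step R (reach R r') r else a.

Lemma row_hitsP R h r :
  reflect (exists2 y : gvert n m, y \in R & (y.2 : nat) = r /\ y.1 <= h) (row_hits R h r).
Proof.
apply: (iffP existsP) => [[y /and3P [yR /eqP ? ?]]|[y yR [? ?]]]; first by exists y.
by exists y; rewrite yR /=; apply/andP; split => //; apply/eqP.
Qed.

Lemma row_max_ge R r x : x \in R -> (x.2 : nat) = r -> x.1 <= row_max R r.
Proof. by move=> xR xr; apply: (leq_bigmax_cond x); rewrite xR xr eqxx. Qed.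

Lemma row_max_attained R r : (exists2 y : gvert n m, y \in R & (y.2 : nat) = r) ->
  exists2 z : gvert n m, z \in R & (z.2 : nat) = r /\ (z.1 : nat) = row_max R r.
Proof.
move=> [y yR yr].
have [|z] := @eq_bigmax_cond _ [pred x in R | x.2 == r :> nat] (fun x => (x.1 : nat)).
  by apply/card_gt0P; exists y; rewrite inE yR yr eqxx.
by rewrite inE => /andP [zR /eqP zr] E; exists z => //; rewrite /row_max E.
Qed.

Lemma row_max_le M R r :
  (forall z : gvert n m, z \in M -> (z.2 : nat) = r ->
     exists2 z' : gvert n m, z' \in R & (z'.2 : nat) = r /\ z.1 <= z'.1) ->
  row_max M r <= row_max R r.
Proof.
move=> H; apply/bigmax_leqP => z /andP [zM /eqP zr].
by have [z' z'R [z'r zz']] := H z zM zr; apply: leq_trans zz' (row_max_ge z'R z'r).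
Qed.

Lemma reach_step_ge R h r : h <= reach_step R h r.
Proof. by rewrite /reach_step; case: ifP => // _; apply: leq_maxl. Qed.

Lemma reach_step_le_max R h r : reach_step R h r <= maxn h (row_max R r).
Proof. by rewrite /reach_step; case: ifP => // _; apply: leq_maxl. Qed.

Lemma row_max_le_reach_step R h r : row_hits R h r -> row_max R r <= reach_step R h r.
Proof. by rewrite /reach_step => ->; apply: leq_maxr. Qed.

Lemma reach_step_gt R h r :
  h < reach_step R h r -> row_hits R h r /\ reach_step R h r = row_max R r.
Proof. rewrite /reach_step; case: ifP => // _; lia. Qed.

Lemma reach_step_mono R h h' r : h <= h' -> reach_step R h r <= reach_step R h' r.
Proof.
move=> hh'; case: (leqP (reach_step R h r) h) => [le|/reach_step_gt [+ ->]].
  exact: leq_trans le (leq_trans hh' (reach_step_ge _ _ _)).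
case/row_hitsP => y yR [yr yh]; apply: row_max_le_reach_step.
by apply/row_hitsP; exists y => //; split => //; apply: leq_trans hh'.
Qed.

Lemma reach_step_le M R h r :
  row_hits R h r -> row_max M r <= row_max R r -> reach_step M h r <= reach_step R h r.
Proof.
move=> hit le; apply: leq_trans (reach_step_le_max _ _ _) _.
by rewrite geq_max reach_step_ge (leq_trans le) ?row_max_le_reach_step.
Qed.

Lemma reach_step_eq M R h r :
  (forall y : gvert n m, (y.2 : nat) = r -> (y \in M) = (y \in R)) ->
  reach_step M h r = reach_step R h r.
Proof.
move=> H; rewrite /reach_step /row_hits /row_max.
have E y : (y \in M) && (y.2 == r :> nat) = (y \in R) && (y.2 == r :> nat).
  by case: eqP => [/H ->|]; rewrite ?andbF.
rewrite (eq_bigl _ _ E); congr (if _ then _ else _); apply: eq_existsb => y.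
by rewrite andbA E -andbA.
Qed.

Lemma reach_mono R r r' : r <= r' -> reach R r <= reach R r'.
Proof.
move=> /subnK <-; elim: (r' - r) => //= k IH.
exact: leq_trans IH (reach_step_ge _ _ _).
Qed.

Lemma reach_eq_below M R s : (forall y : gvert n m, y.2 < s -> (y \in M) = (y \in R)) ->
  forall r, r < s -> reach M r = reach R r.
Proof.
move=> H; elim=> //= r IH rs; rewrite IH 1?ltnW //.
by apply: reach_step_eq => y yr; apply: H; rewrite yr.
Qed.

Lemma reach_le_above M R s : (forall y : gvert n m, s < y.2 -> (y \in M) = (y \in R)) ->
  reach M s <= reach R s -> forall r, s <= r -> reach M r <= reach R r.
Proof.
move=> H Hs r /subnK <-; elim: (r - s) => //= k IH.
rewrite (@reach_step_eq M R) ?reach_step_mono // => y yr; apply: H; lia.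
Qed.

End Reach.

Section ReachPaths.
Variables (n m : nat) (u v : gvert n m).
Hypotheses (u_row : (u.2 : nat) = 0) (v_row : (v.2 : nat) = m.-1).
Implicit Types (x y z p q : gvert n m) (R : {set gvert n m}).

Lemma shortest_step_direction x y k :
  gdist x y = 1 -> gdist y v <= k -> gdist x v = k.+1 -> x.1 <= v.1 ->
  y.1 <= v.1 /\
  ((y.1 : nat) = x.1.+1 /\ (y.2 : nat) = x.2 \/ (y.1 : nat) = x.1 /\ (y.2 : nat) = x.2.+1).
Proof.
have := ltn_ord x.2; have := ltn_ord y.2; have := gdist_triangle x y v.
rewrite /gdist /absd v_row; lia.
Qed.

Lemma hseg_step_within_reach R x y :
  (forall z : gvert n m, z \in R -> (z.2 : nat) = 0 -> z = u) -> hseg_step R x y ->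
  ((y.1 : nat) = x.1.+1 /\ (y.2 : nat) = x.2 \/ (y.1 : nat) = x.1 /\ (y.2 : nat) = x.2.+1) ->
  x.1 <= reach u.1 R x.2 -> y.1 <= reach u.1 R y.2.
Proof.
move=> row0 st [[y1 y2]|[-> ->]] xh; last exact: leq_trans xh (reach_mono _ _ (leqnSn _)).
have [|x' x'R [y' y'R [ex ey mn mx]]] := hseg_step_horizontal st; first lia.
rewrite y2 y1; move: xh ex ey; case: (nat_of_ord x.2) => [|r] /= xh ex ey.
  by move: mn mx; rewrite (row0 _ x'R ex) (row0 _ y'R ey); lia.
have hit : row_hits R (reach u.1 R r) r.+1.
  case: (leqP x.1 (reach u.1 R r)) => xr; last by case: (reach_step_gt (leq_trans xr xh)).
  by apply/row_hitsP; case: (leqP x'.1 y'.1) => le; [exists x' | exists y'] => //; lia.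
apply: leq_trans (row_max_le_reach_step hit); apply: leq_trans (_ : maxn x'.1 y'.1 <= _).
  by lia.
by rewrite geq_max !row_max_ge.
Qed.

Lemma hseg_path_within_reach R s x :
  (forall z : gvert n m, z \in R -> (z.2 : nat) = 0 -> z = u) ->
  path (hseg_step R) x s -> last x s = v -> size s = gdist x v ->
  x.1 <= v.1 -> x.1 <= reach u.1 R x.2 -> v.1 <= reach u.1 R m.-1.
Proof.
move=> row0; elim: s x => [|y s IH] x /=; first by move=> _ -> _ _; rewrite v_row.
case/andP => st pth lst sz xv xh.
have ys : gdist y v <= size s by rewrite -lst; exact: path_gdist_le_size pth.
have [yv dir] := shortest_step_direction (hseg_step_gdist st) ys (esym sz) xv.
apply: IH pth lst _ yv (hseg_step_within_reach row0 st dir xh).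
by have := gdist_triangle x y v; rewrite (hseg_step_gdist st); lia.
Qed.

Definition hreachable R p := exists s, shortest_path_by (hseg_step R) u p s.

Lemma hreachable_step R p q :
  hreachable R p -> hseg_step R p q -> gdist u q = (gdist u p).+1 -> hreachable R q.
Proof.
move=> [s /and3P [pth /eqP l /eqP sz]] st d; exists (rcons s q).
by rewrite /shortest_path_by rcons_path pth l st last_rcons size_rcons sz d !eqxx.
Qed.

Lemma reach_covered R : u \in R -> forall r c, u.1 <= c <= reach u.1 R r ->
  exists2 x : gvert n m, x \in R & exists2 y : gvert n m, y \in R &
    (x.2 : nat) = y.2 /\ minn x.1 y.1 <= c <= maxn x.1 y.1.
Proof.
move=> uR; elim=> [|r IH] c /= /andP [uc cr].
  by exists u => //; exists u => //; split => //; lia.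
case: (leqP c (reach u.1 R r)) => rc; first by apply: IH; rewrite uc.
have [/row_hitsP [y yR [yr yh]] E] := reach_step_gt (leq_trans rc cr).
have [z zR [zr zm]] := row_max_attained (ex_intro2 _ _ y yR yr).
by exists y => //; exists z => //; split; [rewrite yr zr | lia].
Qed.

Lemma hreachable_along_row R y z p : y \in R -> z \in R -> (y.2 : nat) = z.2 ->
  (p.2 : nat) = y.2 -> y.1 <= p.1 -> u.1 <= p.1 -> hreachable R p ->
  forall q : gvert n m, (q.2 : nat) = p.2 -> p.1 <= q.1 <= z.1 -> hreachable R q.
Proof.
move=> yR zR yz py yp up Hp q + /andP [+ +]; move Ek : (q.1 - p.1) => k.
elim: k q Ek => [|k IH] q Ek qp pq qz; first by have -> : q = p by apply: gvert_eq; lia.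
have q0n : q.1.-1 < n by have := ltn_ord q.1; lia.
pose q0 : gvert n m := (Ordinal q0n, q.2).
apply: (@hreachable_step _ q0); first by apply: IH => /=; lia.
  by apply: (hseg_step_right yR zR) => /=; lia.
by rewrite /gdist /absd /=; lia.
Qed.

Lemma hreachable_within_reach R : u \in R ->
  forall r (p : gvert n m), (p.2 : nat) = r -> u.1 <= p.1 <= reach u.1 R r -> hreachable R p.
Proof.
move=> uR; elim=> [|r IH] p pr /= /andP [up ph].
  have -> : p = u by apply: gvert_eq; lia.
  by exists [::]; rewrite /shortest_path_by /= eqxx /gdist /absd; lia.
have rm : r < m by have := ltn_ord p.2; lia.
have climb q : (q.2 : nat) = r.+1 -> u.1 <= q.1 <= reach u.1 R r -> hreachable R q.
  move=> qr qh; have [x xR [y yR [xy cov]]] := reach_covered uR qh.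
  apply: (@hreachable_step _ (q.1, Ordinal rm)); first by apply: IH.
    by apply: (hseg_step_up xR yR xy) => /=.
  by rewrite /gdist /absd /= qr u_row; lia.
case: (leqP p.1 (reach u.1 R r)) => hp; first by apply: climb; rewrite ?up.
have [/row_hitsP [y yR [yr yh]] E] := reach_step_gt (leq_trans hp ph).
have [z zR [zr zm]] := row_max_attained (ex_intro2 _ _ y yR yr).
have ua : u.1 <= reach u.1 R r by apply: (@reach_mono _ _ _ _ 0).
have hn : reach u.1 R r < n by have := ltn_ord p.1; lia.
apply: (@hreachable_along_row _ y z (Ordinal hn, p.2)) => //=; try lia.
by apply: climb => /=; lia.
Qed.

Lemma hlsp_exists_iff_reach R : u \in R -> v \in R ->
  (forall z : gvert n m, z \in R -> (z.2 : nat) = 0 -> z = u) -> u.1 <= v.1 ->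
  hlsp_exists R u v <-> v.1 <= reach u.1 R m.-1.
Proof.
move=> uR vR row0 uv; split => [[_ _ [s /and3P [pth /eqP lst /eqP sz]]]|vh].
  by apply: (hseg_path_within_reach row0 pth lst sz uv); rewrite u_row.
have [|s ?] := hreachable_within_reach uR v_row (p := v); first by rewrite uv.
by split => //; exists s.
Qed.

End ReachPaths.

Definition only_opposite_pair n m (M : {set gvert n m}) (u v : gvert n m) :=
  forall x y : gvert n m, x \in M -> y \in M -> opp_sides x y ->
    (x = u /\ y = v) \/ (x = v /\ y = u).

Section BottomToTop.
Variables (n m : nat) (M : {set gvert n m}) (u v : gvert n m).
Hypotheses (m_gt2 : 2 < m) (u_row : (u.2 : nat) = 0) (v_row : (v.2 : nat) = m.-1).
Hypotheses (uv_col : u.1 < v.1) (opp_uv : only_opposite_pair M u v).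
Hypothesis uv_min : minimal_hlsp M u v.
Implicit Types (x y z w : gvert n m).

Lemma u_in_M : u \in M. Proof. by case: uv_min => [[]]. Qed.
Lemma v_in_M : v \in M. Proof. by case: uv_min => [[]]. Qed.

Lemma bottom_row_eq_u x : x \in M -> (x.2 : nat) = 0 -> x = u.
Proof.
move=> xM x0; case: (opp_uv xM v_in_M) => [|[]|[-> ->]] //.
by rewrite /opp_sides /opp_horiz_sides x0 v_row !eqxx orbT.
Qed.

Lemma top_row_eq_v x : x \in M -> (x.2 : nat) = m.-1 -> x = v.
Proof.
move=> xM xT; case: (opp_uv u_in_M xM) => [|[]|[-> ->]] //.
by rewrite /opp_sides /opp_horiz_sides xT u_row !eqxx orbT.
Qed.

Lemma above_bottom_row x : x \in M -> x != u -> 0 < x.2.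
Proof. by move=> xM; apply: contraR; rewrite -eqn0Ngt => /eqP /(bottom_row_eq_u xM) ->. Qed.

Lemma below_top_row x : x \in M -> x != v -> x.2 < m.-1.
Proof.
move=> xM xv; have := ltn_ord x.2; suff : (x.2 : nat) != m.-1 by lia.
by apply: contra xv => /eqP /(top_row_eq_v xM) ->.
Qed.

Lemma removal_one_vertical_side w : w = u \/ w = v ->
  (forall z : gvert n m, z \in M :\ w -> 0 < z.1) \/
  (forall z : gvert n m, z \in M :\ w -> z.1 < n.-1).
Proof.
move=> wuv; case: (boolP [exists z in M :\ w, z.1 == 0 :> nat]); last first.
  by move/existsPn=> H; left=> z zR; move: (H z); rewrite zR lt0n.
case/existsP=> x /andP [/setD1P [xw xM] /eqP x0]; right=> z /setD1P [zw zM].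
have := ltn_ord z.1; suff : (z.1 : nat) != n.-1 by lia.
apply/eqP => zn; have opp : opp_sides x z by rewrite /opp_sides /opp_vert_sides x0 zn !eqxx.
by move: xw zw; case: (opp_uv xM zM opp) => [[-> ->]|[-> ->]]; case: wuv => ->; rewrite eqxx.
Qed.

Lemma v_within_reach : v.1 <= reach u.1 M m.-1.
Proof.
have [hlsp _] := uv_min.
exact: (hlsp_exists_iff_reach u_row v_row u_in_M v_in_M bottom_row_eq_u (ltnW uv_col)).1 hlsp.
Qed.

Lemma removal_reach_lt_v w : w \in M -> w != u -> w != v -> reach u.1 (M :\ w) m.-1 < v.1.
Proof.
move=> wM wu wv; rewrite ltnNge; apply/negP => vh; have [_ /(_ w wM)] := uv_min; apply.
have uR : u \in M :\ w by rewrite !inE eq_sym wu u_in_M.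
have vR : v \in M :\ w by rewrite !inE eq_sym wv v_in_M.
have row0 z : z \in M :\ w -> (z.2 : nat) = 0 -> z = u.
  by case/setD1P => _; apply: bottom_row_eq_u.
exact: (hlsp_exists_iff_reach u_row v_row uR vR row0 (ltnW uv_col)).2 vh.
Qed.

Lemma removal_reach_lt w s : w \in M -> w != u -> w != v -> w.2 <= s < m ->
  reach u.1 (M :\ w) s < reach u.1 M s.
Proof.
move=> wM wu wv /andP [ws sm]; rewrite ltnNge; apply/negP => le.
have := removal_reach_lt_v wM wu wv; rewrite ltnNge => /negP; apply.
apply: leq_trans v_within_reach (reach_le_above _ le _); last lia.
by move=> y ys; rewrite in_setD1_other_row //; apply/eqP; lia.
Qed.

Lemma removal_reach_below w r : r < w.2 -> reach u.1 (M :\ w) r = reach u.1 M r.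
Proof.
move=> rw; apply: (@reach_eq_below _ _ _ _ _ w.2) => // y yw.
by rewrite in_setD1_other_row //; apply/eqP; lia.
Qed.

Lemma inner_row_vertex x s : x \in M -> (x.2 : nat) = s.+1 -> s.+1 < m.-1 ->
  [/\ x != u, x != v & x.2 <= s.+1 < m].
Proof.
move=> xM xs sm; split; last by rewrite xs leqnn; lia.
- by apply/eqP => E; move: xs; rewrite E u_row.
- by apply/eqP => E; move: xs sm; rewrite E v_row; lia.
Qed.

(* Otherwise removing [x] would not lower the reach. *)
Lemma reach_row_max x s : x \in M -> (x.2 : nat) = s.+1 -> s.+1 < m.-1 ->
  reach u.1 M s.+1 = row_max M s.+1.
Proof.
move=> xM xs sm; have [xu xv xle] := inner_row_vertex xM xs sm.
have := removal_reach_lt xM xu xv xle; rewrite /= removal_reach_below ?xs //.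
by move/(leq_ltn_trans (reach_step_ge _ _ _))/reach_step_gt => [_ <-].
Qed.

Lemma mem_within_reach x : x \in M -> x.2 < m.-1 -> x.1 <= reach u.1 M x.2.
Proof.
move=> xM; case E: (nat_of_ord x.2) => [|s] xm.
  by rewrite (bottom_row_eq_u xM E).
by rewrite (reach_row_max xM E xm) row_max_ge.
Qed.

Lemma row_no_three (l x h : gvert n m) s : l \in M -> x \in M -> h \in M ->
  (l.2 : nat) = s.+1 -> (x.2 : nat) = s.+1 -> (h.2 : nat) = s.+1 -> s.+1 < m.-1 ->
  l.1 < x.1 < h.1 -> l.1 <= reach u.1 M s -> False.
Proof.
move=> lM xM hM ls xs hs sm /andP [lx xh] lr.
have [xu xv xle] := inner_row_vertex xM xs sm.
have := removal_reach_lt xM xu xv xle; rewrite /= removal_reach_below ?xs // ltnNge => /negP.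
have lR : l \in M :\ x by rewrite !inE lM andbT; apply: contraTneq lx => ->; rewrite ltnn.
have hR : h \in M :\ x by rewrite !inE hM andbT; apply: contraTneq xh => ->; rewrite ltnn.
apply; apply: reach_step_le; first by apply/row_hitsP; exists l.
apply: row_max_le => z zM zs; case: (eqVneq z x) => [->|zx].
  by exists h => //; split => //; apply: ltnW.
by exists z; rewrite ?inE ?zx.
Qed.

Section InnerRemoval.
Variables (w : gvert n m) (r : nat).
Hypotheses (wM : w \in M) (w_row : (w.2 : nat) = r.+1) (w_inner : r.+1 < m.-1).
Local Notation c := (reach u.1 M r).

Let w_neq_u : w != u. Proof. by case: (inner_row_vertex wM w_row w_inner). Qed.
Let w_neq_v : w != v. Proof. by case: (inner_row_vertex wM w_row w_inner). Qed.

Lemma reach_lt_v : c < v.1.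
Proof.
rewrite -(removal_reach_below (w := w)) ?w_row //.
apply: leq_ltn_trans (removal_reach_lt_v wM w_neq_u w_neq_v); apply: reach_mono; lia.
Qed.

Lemma removal_below_within z : z \in M -> z.2 <= r -> z.1 <= c.
Proof.
move=> zM zr; apply: leq_trans (mem_within_reach zM _) (reach_mono _ _ zr); lia.
Qed.

Lemma removal_above_beyond z : z \in M :\ w -> r.+1 < z.2 -> c < z.1.
Proof.
move=> /setD1P [zw zM] rz; rewrite ltnNge; apply/negP => zc.
case: (eqVneq z v) => [zv|zv]; first by have := reach_lt_v; rewrite -zv; lia.
have zT := below_top_row zM zv.
case E: (nat_of_ord z.2) rz zT => [//|s] rz zT.
have/negP : ~~ (reach u.1 M s.+1 <= reach u.1 (M :\ w) s.+1).
  by rewrite -ltnNge removal_reach_lt // w_row ltnW //; lia.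
apply; rewrite (reach_row_max zM E zT) /=.
have zR : z \in M :\ w by rewrite !inE zw.
apply: leq_trans (row_max_le_reach_step _).
  apply: row_max_le => y yM ys; exists y => //; rewrite in_setD1_other_row //; apply/eqP; lia.
apply/row_hitsP; exists z => //; split => //; apply: leq_trans zc _.
by rewrite -(removal_reach_below (w := w)) ?w_row // reach_mono //; lia.
Qed.

Lemma removal_row_one_side x y : x \in M :\ w -> y \in M :\ w ->
  (x.2 : nat) = r.+1 -> (y.2 : nat) = r.+1 -> x.1 <= c -> c < y.1 -> False.
Proof.
move=> /setD1P [xw xM] /setD1P [yw yM] xr yr xc cy.
have col (z : gvert n m) : z != w -> (z.2 : nat) = r.+1 -> (z.1 : nat) != w.1.
  by move=> zw zr; apply: contra zw => /eqP e; apply/eqP/gvert_eq; rewrite ?zr.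
have /col/(_ xr) := xw; have /col/(_ yr) := yw; rewrite !neq_ltn => /orP [yl|yg] /orP [xl|xg].
- by apply: (row_no_three (s := r) xM yM wM); rewrite ?xr ?yr ?w_row //; lia.
- lia.
- by apply: (row_no_three (s := r) xM wM yM); rewrite ?xr ?yr ?w_row //; lia.
- by apply: (row_no_three (s := r) wM xM yM); rewrite ?xr ?yr ?w_row //; lia.
Qed.

Lemma removal_inner_not_resolving : ~ resolving (M :\ w).
Proof.
have cn : c.+1 < n by have := reach_lt_v; have := ltn_ord v.1; lia.
have sides z : z \in M :\ w -> (z.2 <= r -> z.1 <= c) /\ (r.+1 < z.2 -> c < z.1).
  by move=> zR; split; [apply: removal_below_within; case/setD1P: zR | apply: removal_above_beyond].
case: (boolP [exists z in M :\ w, (z.2 == r.+1 :> nat) && (z.1 <= c)]).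
  case/existsP => x /and3P [xR /eqP xr xc].
  apply: (@diagonal_split_not_resolving _ _ _ c r.+1); [lia | lia | move=> z zR].
  have [lo hi] := sides z zR; case: (ltngtP z.2 r.+1) => zr.
  - exact: lo.
  - by rewrite leqNgt hi.
  - by apply/idP; rewrite leqNgt; apply/negP; apply: removal_row_one_side xR zR xr zr xc.
move/existsPn => none; apply: (@diagonal_split_not_resolving _ _ _ c r); [lia | lia | move=> z zR].
have [lo hi] := sides z zR; case: (ltngtP z.2 r.+1) => zr.
- by rewrite lo // -ltnS.
- by rewrite leqNgt hi // leqNgt ltnW.
- by have := none z; rewrite zR zr eqxx /= => /negbTE ->; rewrite ltnn.
Qed.

End InnerRemoval.

Lemma removal_u_not_resolving : ~ resolving (M :\ u).
Proof.
have above z : z \in M :\ u -> 0 < z.2 by case/setD1P => zu zM; apply: above_bottom_row.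
have n_gt1 : 1 < n by have := ltn_ord v.1; lia.
case: (removal_one_vertical_side (or_introl erefl)) => side.
  apply: (@diagonal_split_not_resolving _ _ _ 0 0); [lia | lia | move=> z zR].
  by have := side z zR; have := above z zR; case: leqP; case: leqP; lia.
apply: (@antidiagonal_split_not_resolving _ _ _ n.-2 0); [lia | lia | move=> z zR].
by have := side z zR; have := above z zR; case: leqP; case: ltnP; lia.
Qed.

Lemma removal_v_not_resolving : ~ resolving (M :\ v).
Proof.
have below z : z \in M :\ v -> z.2 < m.-1 by case/setD1P => zv zM; apply: below_top_row.
have n_gt1 : 1 < n by have := ltn_ord v.1; lia.
case: (removal_one_vertical_side (or_intror erefl)) => side.
  apply: (@antidiagonal_split_not_resolving _ _ _ 0 m.-2); [lia | lia | move=> z zR].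
  by have := side z zR; have := below z zR; case: leqP; case: ltnP; lia.
apply: (@diagonal_split_not_resolving _ _ _ n.-2 m.-2); [lia | lia | move=> z zR].
by have := side z zR; have := below z zR; case: leqP; case: leqP; lia.
Qed.

Lemma resolving_bottom_to_top : resolving M.
Proof.
have cross (p q : gvert n m) : p.1 < q.1 -> gdist u p = gdist u q -> gdist v p = gdist v q ->
    exists2 w, w \in M & resolves w p q.
  move=> pq du dv; have := ltn_ord p.2; have := ltn_ord q.2 => qm pm.
  have gap : maxn p.1 u.1 < minn q.1 v.1 by move: du dv; rewrite /gdist /absd u_row v_row; lia.
  have [[_ _ [s /and3P [pth /eqP lst _]]] _] := uv_min.
  have [|x xM [y yM [xy seg]]] := hseg_path_crosses pth (leq_maxr p.1 u.1).
    by rewrite lst; lia.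
  have pq' : p.1 <= maxn p.1 u.1 < q.1 by lia.
  by case/orP: (straddling_segment_resolves xy seg pq') => ?; [exists x | exists y].
move=> p q pq.
case: (boolP (resolves u p q)) => [ru|/negPn/eqP du]; first by exists u; rewrite ?u_in_M.
case: (boolP (resolves v p q)) => [rv|/negPn/eqP dv]; first by exists v; rewrite ?v_in_M.
case: (ltngtP p.1 q.1) => [lt|gt|eq1]; first exact: cross.
  by have [w wM] := cross q p gt (esym du) (esym dv); exists w; rewrite // /resolves eq_sym.
by case/eqP: pq; apply: gvert_eq => //; move: du; rewrite /gdist /absd u_row eq1; lia.
Qed.

Lemma kminimal_bottom_to_top : kminimal #|M| M.
Proof.
split => // x xM; first exact: resolving_bottom_to_top.
case: (eqVneq x u) => [->|xu]; first exact: removal_u_not_resolving.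
case: (eqVneq x v) => [->|xv]; first exact: removal_v_not_resolving.
case E: (nat_of_ord x.2) (above_bottom_row xM xu) (below_top_row xM xv) => [//|r] _ xr.
exact: removal_inner_not_resolving xM E xr.
Qed.

End BottomToTop.

Lemma only_opposite_pairC n m (M : {set gvert n m}) u v :
  only_opposite_pair M u v -> only_opposite_pair M v u.
Proof. by move=> H x y xM yM /(H x y xM yM) [] []; [right | left]. Qed.

Lemma hlsp_existsC n m (R : {set gvert n m}) u v : hlsp_exists R u v -> hlsp_exists R v u.
Proof.
move=> [uR vR [s /and3P [pth /eqP lst /eqP sz]]]; split => //.
exists (rev (belast u s)); apply/and3P; split.
- by rewrite -lst rev_path; apply: sub_path pth => x y /=; rewrite hseg_stepC.
- by rewrite -lst; case: s {pth lst sz} => //= y s; rewrite rev_cons last_rcons.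
- by rewrite size_rev size_belast sz gdistC.
Qed.

Lemma minimal_hlspC n m (M : {set gvert n m}) u v : minimal_hlsp M u v -> minimal_hlsp M v u.
Proof. by move=> [ex mn]; split=> [|w wM /hlsp_existsC]; [apply: hlsp_existsC | apply: mn]. Qed.

(* [minimal_hlsp] and [minimal_vlsp] are [minimal_seg_path] for [hseg_step] and
   [vseg_step] respectively. *)
Definition seg_path_exists n m (step : {set gvert n m} -> rel (gvert n m))
    (R : {set gvert n m}) (u v : gvert n m) :=
  [/\ u \in R, v \in R & exists s, shortest_path_by (step R) u v s].

Definition minimal_seg_path n m (step : {set gvert n m} -> rel (gvert n m))
    (M : {set gvert n m}) (u v : gvert n m) :=
  seg_path_exists step M u v /\ forall w, w \in M -> ~ seg_path_exists step (M :\ w) u v.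

Section SegPathImage.
Variables (n m n' m' : nat) (f : gvert n m -> gvert n' m').
Hypothesis f_gdist : forall x y, gdist (f x) (f y) = gdist x y.
Variables (step : {set gvert n m} -> rel (gvert n m))
          (step' : {set gvert n' m'} -> rel (gvert n' m')).
Hypothesis f_step : forall R x y, step R x y -> step' (f @: R) (f x) (f y).

Lemma seg_path_exists_image R u v :
  seg_path_exists step R u v -> seg_path_exists step' (f @: R) (f u) (f v).
Proof.
move=> [uR vR [s /and3P [pth /eqP lst /eqP sz]]]; split; rewrite ?imset_f //.
exists (map f s); apply/and3P; split; last by rewrite size_map sz f_gdist.
  by elim: s (u) pth {lst sz} => //= y s IH x /andP [/f_step -> /IH].
by rewrite last_map lst.
Qed.

End SegPathImage.

Section Isometry.
Variables n m n' m' : nat.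
Variables (f : gvert n m -> gvert n' m') (g : gvert n' m' -> gvert n m).
Hypotheses (fK : cancel f g) (gK : cancel g f).
Hypothesis f_gdist : forall x y, gdist (f x) (f y) = gdist x y.

Let f_inj : injective f := can_inj fK.

Lemma g_gdist x y : gdist (g x) (g y) = gdist x y.
Proof. by rewrite -f_gdist !gK. Qed.

Lemma imset_setD1 (A : {set gvert n m}) x : f @: (A :\ x) = f @: A :\ f x.
Proof.
apply/setP => y; rewrite !inE; apply/imsetP/andP => [[z /setD1P [zx zA] ->]|[yx /imsetP [z zA E]]].
  by rewrite (inj_eq f_inj) zx imset_f.
by exists z; rewrite // !inE zA andbT; apply: contra yx => /eqP <-; rewrite E.
Qed.

Lemma resolving_image (R : {set gvert n m}) : resolving (f @: R) <-> resolving R.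
Proof.
split=> res a b ab.
  have [|_ /imsetP [w wR ->]] := res (f a) (f b); first by rewrite (inj_eq f_inj).
  by rewrite /resolves !f_gdist; exists w.
have [|w wR] := res (g a) (g b); first by rewrite (inj_eq (can_inj gK)).
have e c : gdist w (g c) = gdist (f w) c by rewrite -f_gdist gK.
by rewrite /resolves !e => rw; exists (f w); rewrite ?imset_f.
Qed.

Lemma kminimal_image k (M : {set gvert n m}) : kminimal k (f @: M) -> kminimal k M.
Proof.
case=> /resolving_image res card mn; split => //; first by rewrite -card card_imset.
by move=> x xM /resolving_image; rewrite imset_setD1; apply: mn; rewrite imset_f.
Qed.

Lemma only_opposite_pair_image (M : {set gvert n m}) u v :
  (forall x y, opp_sides (f x) (f y) = opp_sides x y) ->
  only_opposite_pair M u v -> only_opposite_pair (f @: M) (f u) (f v).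
Proof.
move=> f_opp H _ _ /imsetP [x xM ->] /imsetP [y yM ->]; rewrite f_opp => /(H x y xM yM).
by case=> [] [-> ->]; [left | right].
Qed.

Lemma minimal_seg_path_image (step : {set gvert n m} -> rel (gvert n m))
    (step' : {set gvert n' m'} -> rel (gvert n' m')) M u v :
  (forall R x y, step R x y -> step' (f @: R) (f x) (f y)) ->
  (forall R x y, step' R x y -> step (g @: R) (g x) (g y)) ->
  minimal_seg_path step M u v -> minimal_seg_path step' (f @: M) (f u) (f v).
Proof.
move=> f_step g_step [ex mn]; split=> [|_ /imsetP [w wM ->]].
  exact: (seg_path_exists_image (f := f) f_gdist f_step ex).
rewrite -imset_setD1 => /(seg_path_exists_image g_gdist g_step).
by rewrite -imset_comp (eq_imset _ fK) imset_id !fK; apply: mn.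
Qed.

End Isometry.

Lemma exists_pair_imset (T U : finType) (f : T -> U) (A : {set T}) (P : U -> U -> bool) :
  [exists x in f @: A, exists y in f @: A, P x y] = [exists x in A, exists y in A, P (f x) (f y)].
Proof.
apply/existsP/existsP => [[_ /andP [/imsetP [x xA ->] /existsP [_ /andP [/imsetP [y yA ->] H]]]]|].
  by exists x; rewrite xA; apply/existsP; exists y; rewrite yA.
case=> x /andP [xA /existsP [y /andP [yA H]]].
by exists (f x); rewrite imset_f //; apply/existsP; exists (f y); rewrite imset_f.
Qed.

Definition grid_transpose {n m} (x : gvert n m) : gvert m n := (x.2, x.1).
Definition grid_mirror {n m} (x : gvert n m) : gvert n m := (rev_ord x.1, x.2).

Section Symmetries.
Variables n m : nat.
Implicit Types (x y : gvert n m) (R : {set gvert n m}).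

Lemma grid_transposeK : cancel (@grid_transpose n m) (@grid_transpose m n).
Proof. by case. Qed.

Lemma grid_transpose_gdist x y : gdist (grid_transpose x) (grid_transpose y) = gdist x y.
Proof. by rewrite /gdist addnC. Qed.

Lemma grid_transpose_opp_sides x y :
  opp_sides (grid_transpose x) (grid_transpose y) = opp_sides x y.
Proof. by rewrite /opp_sides orbC. Qed.

Lemma grid_transpose_hseg_step R x y :
  hseg_step R x y -> vseg_step (grid_transpose @: R) (grid_transpose x) (grid_transpose y).
Proof. by rewrite /vseg_step /hseg_step !exists_pair_imset /gadj grid_transpose_gdist. Qed.

Lemma grid_transpose_vseg_step R x y :
  vseg_step R x y -> hseg_step (grid_transpose @: R) (grid_transpose x) (grid_transpose y).
Proof. by rewrite /vseg_step /hseg_step !exists_pair_imset /gadj grid_transpose_gdist. Qed.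

Lemma grid_mirrorK : involutive (@grid_mirror n m).
Proof. by case=> a b; rewrite /grid_mirror rev_ordK. Qed.

Lemma grid_mirror_gdist x y : gdist (grid_mirror x) (grid_mirror y) = gdist x y.
Proof. by rewrite /gdist /absd /=; have := ltn_ord x.1; have := ltn_ord y.1; lia. Qed.

Lemma grid_mirror_col0 x : ((grid_mirror x).1 == 0 :> nat) = (x.1 == n.-1 :> nat).
Proof. by have := ltn_ord x.1; rewrite /=; do 2 case: eqP; lia. Qed.

Lemma grid_mirror_colN x : ((grid_mirror x).1 == n.-1 :> nat) = (x.1 == 0 :> nat).
Proof. by have := ltn_ord x.1; rewrite /=; do 2 case: eqP; lia. Qed.

Lemma grid_mirror_opp_sides x y : opp_sides (grid_mirror x) (grid_mirror y) = opp_sides x y.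
Proof.
rewrite /opp_sides /opp_vert_sides !grid_mirror_col0 !grid_mirror_colN.
by congr (_ || _); apply: orbC.
Qed.

Lemma grid_mirror_hseg_step R x y :
  hseg_step R x y -> hseg_step (grid_mirror @: R) (grid_mirror x) (grid_mirror y).
Proof.
have := ltn_ord x.1; have := ltn_ord y.1 => yn xn.
rewrite /hseg_step !exists_pair_imset /gadj grid_mirror_gdist /=.
case/andP => -> /orP [] /andP [e /existsP [x' /andP [x'R /existsP [y' /andP [y'R H]]]]];
  apply/orP; [left | right]; apply/andP; split; rewrite ?e //;
  try (apply/existsP; exists x'; rewrite x'R; apply/existsP; exists y'; rewrite y'R /=);
  move: e H; have := ltn_ord x'.1; have := ltn_ord y'.1; lia.
Qed.
End Symmetries.

Lemma kminimal_bottom_top n m (M : {set gvert n m}) (u v : gvert n m) :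
  2 < m -> (u.2 : nat) = 0 -> (v.2 : nat) = m.-1 -> (u.1 != v.1 :> nat) ->
  only_opposite_pair M u v -> minimal_hlsp M u v -> kminimal #|M| M.
Proof.
move=> m_gt2 u_row v_row uv opp min_path.
case: (ltngtP u.1 v.1) => [lt|gt|eq]; last by rewrite eq eqxx in uv.
  exact: kminimal_bottom_to_top m_gt2 u_row v_row lt opp min_path.
have mK := @grid_mirrorK n m; apply: (kminimal_image mK mK (@grid_mirror_gdist n m)).
rewrite -(card_imset M (can_inj mK)).
apply: (kminimal_bottom_to_top (u := grid_mirror u) (v := grid_mirror v)) => //=.
- by have := ltn_ord u.1; lia.
- exact: only_opposite_pair_image (@grid_mirror_opp_sides n m) opp.
- exact: (minimal_seg_path_image mK mK (@grid_mirror_gdist n m) (step := @hseg_step n m)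
    (@grid_mirror_hseg_step n m) (@grid_mirror_hseg_step n m) min_path).
Qed.

Lemma kminimal_horizontal n m (M : {set gvert n m}) (u v : gvert n m) :
  2 < m -> opp_horiz_sides u v -> (u.1 != v.1 :> nat) ->
  only_opposite_pair M u v -> minimal_hlsp M u v -> kminimal #|M| M.
Proof.
move=> m_gt2 /orP [] /andP [/eqP u_row /eqP v_row] uv opp min_path.
  exact: kminimal_bottom_top m_gt2 u_row v_row uv opp min_path.
apply: (kminimal_bottom_top m_gt2 v_row u_row); first by rewrite eq_sym.
  exact: only_opposite_pairC.
exact: minimal_hlspC.
Qed.

Lemma kminimal_vertical n m (M : {set gvert n m}) (u v : gvert n m) :
  2 < n -> opp_vert_sides u v -> (u.2 != v.2 :> nat) ->
  only_opposite_pair M u v -> minimal_vlsp M u v -> kminimal #|M| M.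
Proof.
move=> n_gt2 opp_uv uv opp min_path.
have tK := @grid_transposeK n m; have tK' := @grid_transposeK m n.
apply: (kminimal_image tK tK' (@grid_transpose_gdist n m)); rewrite -(card_imset M (can_inj tK)).
apply: (kminimal_horizontal (u := grid_transpose u) (v := grid_transpose v)) => //.
- exact: only_opposite_pair_image (@grid_transpose_opp_sides n m) opp.
- exact: (minimal_seg_path_image tK tK' (@grid_transpose_gdist n m) (step := @vseg_step n m)
    (@grid_transpose_vseg_step n m) (@grid_transpose_hseg_step m n) min_path).
Qed.

Theorem theorem4 (n m k : nat) (M : {set gvert n m}) :
  3 <= n -> 3 <= m -> #|M| = k -> 3 < k ->
  #|[set a in M | is_corner a]| <= 1 ->
  (exists u v : gvert n m,
     u \in M /\ v \in M /\ is_boundary u /\ is_boundary v /\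
     opp_sides u v /\ ~~ same_line u v /\
     (forall x y, x \in M -> y \in M -> opp_sides x y ->
        (x = u /\ y = v) \/ (x = v /\ y = u)) /\
     (if opp_horiz_sides u v then minimal_hlsp M u v
      else minimal_vlsp M u v)) ->
  kminimal k M.
Proof.
move=> n_ge3 m_ge3 <- _ _ [u [v [_ [_ [_ [_ [opp_uv [not_line [opp min_path]]]]]]]]].
move: not_line; rewrite /same_line negb_or => /andP [col row].
case: ifP min_path => horiz min_path; first exact: kminimal_horizontal horiz col opp min_path.
apply: kminimal_vertical n_ge3 _ row opp min_path.
by move: opp_uv; rewrite /opp_sides horiz orbF.
Qed.
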